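(* Let $C\subset\mathbb{R}^d$ be a cone and let $D$ be a $d$-dimensional subcone of $C$ such that for every $f$-subcone $S$ of $C$ either $D\subset S$ or $\operatorname{int}(D)\cap\operatorname{int}(S)=\emptyset$. Let $G_D$ be the intersection of the groups $\Gamma(S)$ over all $f$-subcones $S$ of $C$ with $S\supset D$, and $H_D$ the union of these groups. Then $D$ is $f$-covered (every element of $D\cap\mathbb{Z}^d$ is $f$-covered) if and only if every residue class of $\mathbb{Z}^d$ modulo $G_D$ meets $H_D$.
   Context: A cone is a subset $C\subset\mathbb{R}^d$ of the form $\mathbb{R}_+x_1+\dots+\mathbb{R}_+x_n$ with $x_i\in\mathbb{Z}^d$, assumed pointed ($x,-x\in C\Rightarrow x=0$) and of full dimension $d$; a subcone is a cone contained in $C$. $\operatorname{Hilb}(C)$ denotes the Hilbert basis of the monoid $C\cap\mathbb{Z}^d$, i.e. the set of nonzero elements of $C\cap\mathbb{Z}^d$ that cannot be written as $x+y$ with $x,y\in C\cap\mathbb{Z}^d$ both nonzero. An $f$-subcone of $C$ is a cone $S$ generated by $d$ linearly independent vectors $x_1,\dots,x_d\in\operatorname{Hilb}(C)$; for such $S$, $\Gamma(S)$ denotes the subgroup of $\mathbb{Z}^d$ generated by $x_1,\dots,x_d$ and $\Sigma(S)$ the submonoid of $\mathbb{Z}^d$ generated by $x_1,\dots,x_d$. An element $x\in C\cap\mathbb{Z}^d$ is $f$-covered if $x\in\Sigma(S)$ for some $f$-subcone $S$ of $C$; a subset of $C$ is $f$-covered if each of its lattice points is $f$-covered. (There are finitely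 many $f$-subcones, so $G_D$ has finite index when at least one $f$-subcone contains $D$; if none does, $G_D=\mathbb{Z}^d$ and $H_D=\emptyset$.) *)

From HB Require Import structures.
From mathcomp Require Import all_boot all_order all_algebra.
From mathcomp Require Import all_classical all_reals all_analysis.
Set Implicit Arguments. Unset Strict Implicit. Unset Printing Implicit Defensive.
Import Order.TTheory GRing.Theory Num.Theory.
Local Open Scope classical_set_scope.
Local Open Scope ring_scope.

Section Cones.
Variables (R : realType) (d : nat).

Definition vR (z : 'rV[int]_d) : 'rV[R]_d := map_mx (fun a : int => a%:~R) z.

Definition cone_gen (gens : seq 'rV[int]_d) : set 'rV[R]_d :=
  [set x | exists c : 'I_(size gens) -> R,
      (forall i, 0 <= c i) /\ x = \sum_(i < size gens) c i *: vR gens`_i].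

(* a cone in the sense of the paper: finitely generated by integer vectors,
   pointed, and of full dimension d (the generators span R^d) *)
Definition is_cone (C : set 'rV[R]_d) : Prop :=
  (exists gens : seq 'rV[int]_d,
      C = cone_gen gens /\
      (forall x : 'rV[R]_d, exists c : 'I_(size gens) -> R,
          x = \sum_(i < size gens) c i *: vR gens`_i)) /\
  (forall x, C x -> C (- x) -> x = 0).

Definition latC (C : set 'rV[R]_d) (z : 'rV[int]_d) : Prop := C (vR z).

Definition Hilb (C : set 'rV[R]_d) (z : 'rV[int]_d) : Prop :=
  latC C z /\ z <> 0 /\
  ~ (exists x y, latC C x /\ latC C y /\ x <> 0 /\ y <> 0 /\ z = x + y).

(* X (rows x_1,...,x_d) generates an f-subcone of C: the x_i are linearly
   independent elements of Hilb(C) *)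
Definition fgens (C : set 'rV[R]_d) (X : 'M[int]_d) : Prop :=
  (forall i, Hilb C (row i X)) /\ row_free (map_mx (fun a : int => a%:~R : R) X).

Definition fcone (X : 'M[int]_d) : set 'rV[R]_d := cone_gen [seq row i X | i <- enum 'I_d].

Definition Gamma (X : 'M[int]_d) (z : 'rV[int]_d) : Prop :=
  exists a : 'rV[int]_d, z = a *m X.
Definition Sigma (X : 'M[int]_d) (z : 'rV[int]_d) : Prop :=
  exists a : 'rV[int]_d, (forall j, 0 <= a 0 j) /\ z = a *m X.

Definition f_covered_pt (C : set 'rV[R]_d) (z : 'rV[int]_d) : Prop :=
  latC C z /\ exists X, fgens C X /\ Sigma X z.

Definition f_covered_set (C A : set 'rV[R]_d) : Prop :=
  forall z, A (vR z) -> f_covered_pt C z.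

Definition G_D (C D : set 'rV[R]_d) (z : 'rV[int]_d) : Prop :=
  forall X, fgens C X -> D `<=` fcone X -> Gamma X z.
Definition H_D (C D : set 'rV[R]_d) (z : 'rV[int]_d) : Prop :=
  exists X, fgens C X /\ D `<=` fcone X /\ Gamma X z.

End Cones.

From Pilot Require Import Defs.
From HB Require Import structures.
From mathcomp Require Import all_boot all_order all_algebra.
From mathcomp Require Import all_classical all_reals all_analysis.
From mathcomp Require Import perm lra.

Set Implicit Arguments.
Unset Strict Implicit.
Unset Printing Implicit Defensive.
Import Order.TTheory GRing.Theory Num.Theory.
Import numFieldNormedType.Exports.
Local Open Scope classical_set_scope.
Local Open Scope ring_scope.

(* If z - h lies in G_D and h in Gamma(S) for an f-subcone S containing D,
   then z lies in Gamma(S); a point of Gamma(S) inside S has nonnegative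
   coordinates in the basis of S, so it lies in Sigma(S).
   Conversely, the Hilbert basis is bounded, hence so are the determinants of
   the f-subcones, and N Z^d lies in every Gamma(S) for some N > 0.  Given z,
   the point y = z + N k w, with w the sum of the generators of D and k large,
   is interior to D; being f-covered, y lies in some Sigma(S), hence in the
   closure of int(S), so the dichotomy forces D to lie in S.  Then y is in H_D
   and z - y, which lies in N Z^d, is in G_D. *)

Lemma det_norm_le (R : numDomainType) n (X : 'M[R]_n) (b : R) : 0 <= b ->
  (forall i j, `|X i j| <= b) -> `|\det X| <= n`!%:R * b ^+ n.
Proof.
move=> b0 Xb; rewrite /determinant; apply: le_trans (ler_norm_sum _ _ _) _.
apply: (@le_trans _ _ (\sum_(s : 'S_n) b ^+ n)).
  apply: ler_sum => s _; rewrite normrM normrX normrN normr1 expr1n mul1r normr_prod.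
  rewrite -[X in b ^+ X](card_ord n) -prodr_const.
  by apply: ler_prod => i _; rewrite normr_ge0 Xb.
by rewrite sumr_const card_Sn mulr_natl.
Qed.

Lemma sum_cast {V : zmodType} {m k} (e : m = k) (F : 'I_m -> V) :
  \sum_(i < m) F i = \sum_(j < k) F (cast_ord (esym e) j).
Proof. by case: k / e; apply: eq_bigr => i _; congr F; apply: val_inj. Qed.

Section Cones.
Variables (R : realType) (d : nat).
Local Notation vR := (@vR R d).
Local Notation Xr X := (map_mx (fun a : int => a%:~R : R) X).
Local Notation cone_gen := (@cone_gen R d).
Local Notation fcone := (@fcone R d).

HB.instance Definition _ := GRing.Additive.copy vR (map_mx (fun a : int => a%:~R : R)).

Lemma vR_mulmx (a : 'rV[int]_d) (X : 'M[int]_d) : vR (a *m X) = vR a *m Xr X.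
Proof. exact: map_mxM. Qed.

Lemma norm_entry_le (x : 'rV[R]_d) j : `|x ord0 j| <= `|x|.
Proof.
have /mapP[k _ ->] : `|x ord0 j| \in [seq `|x ij.1 ij.2| | ij : 'I_1 * 'I_d].
  by apply/mapP; exists (ord0, j) => //=; rewrite mem_enum.
by rewrite [leRHS]/Num.Def.normr /= mx_normrE; apply/bigmax_geP; right; exists k.
Qed.

Lemma nbhs_normP (x : 'rV[R]_d) (A : set 'rV[R]_d) :
  nbhs x A <-> exists2 r : R, 0 < r & forall y, `|x - y| < r -> A y.
Proof.
rewrite nbhs_ballP; split.
  by move=> [r r0 H]; exists r => // y Hy; apply: H; rewrite -ball_normE.
by move=> [r r0 H]; exists r => // y Hy; apply: H; rewrite -ball_normE in Hy.
Qed.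

Lemma sum_indicator_scale n (F : 'I_n -> 'rV[R]_d) i :
  \sum_k (k == i)%:R *: F k = F i.
Proof.
rewrite (bigD1 i) //= big1 ?eqxx ?scale1r ?addr0 // => k /negbTE ->.
by rewrite scale0r.
Qed.

Section Generators.
Variable gens : seq 'rV[int]_d.
Local Notation n := (size gens).
Local Notation g i := (vR gens`_i).
Local Notation gsum := (\sum_(i < n) g i).

Definition spanning := forall x : 'rV[R]_d, exists c : 'I_n -> R,
  x = \sum_(i < n) c i *: g i.

Lemma cone_gen_add x y : cone_gen gens x -> cone_gen gens y -> cone_gen gens (x + y).
Proof.
move=> [c [c0 ->]] [c' [c0' ->]]; exists (fun i => c i + c' i); split.
  by move=> i; rewrite addr_ge0.
by rewrite -big_split; apply: eq_bigr => i _; rewrite scalerDl.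
Qed.

Lemma latC_gen (i : 'I_n) : latC (cone_gen gens) gens`_i.
Proof.
exists (fun k => (k == i)%:R); split; first by move=> k; case: (k == i).
by rewrite sum_indicator_scale.
Qed.

Hypothesis gens_spanning : spanning.

Lemma spanning_coef_bound : exists2 K : R, 0 < K & forall q, exists c : 'I_n -> R,
  (forall i, `|c i| <= K * `|q|) /\ q = \sum_(i < n) c i *: g i.
Proof.
have [cj Hcj] := choice (fun j : 'I_d => gens_spanning (delta_mx 0 j)).
exists (1 + \sum_i \sum_j `|cj j i|).
  by rewrite ltr_pwDl // sumr_ge0 // => i _; rewrite sumr_ge0.
move=> q; exists (fun i => \sum_j q 0 j * cj j i); split.
  move=> i; apply: le_trans (ler_norm_sum _ _ _) _.
  apply: (@le_trans _ _ (\sum_j `|q| * `|cj j i|)).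
    by apply: ler_sum => j _; rewrite normrM ler_wpM2r // norm_entry_le.
  rewrite -mulr_sumr mulrC ler_wpM2r // [X in _ <= 1 + X](bigD1 i) //= addrA ler_wpDr //.
  - by apply: sumr_ge0 => *; apply: sumr_ge0.
  - by rewrite lerDr.
rewrite {1}(row_sum_delta q).
under eq_bigr => j _ do rewrite (Hcj j) scaler_sumr.
rewrite exchange_big /=; apply: eq_bigr => i _; rewrite scaler_suml.
by apply: eq_bigr => j _; rewrite scalerA.
Qed.

Lemma cone_gen_shift : exists2 K : R, 0 < K & forall t q,
  K * `|q| < t -> cone_gen gens (t *: gsum + q).
Proof.
have [K K0 HK] := spanning_coef_bound; exists K => // t q lt.
have [c [cb ->]] := HK q; exists (fun i => t + c i); split.
  by move=> i; have := lerNnormlW (cb i); move: lt; set u := K * _; lra.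
by rewrite scaler_sumr -big_split; apply: eq_bigr => i _; rewrite scalerDl.
Qed.

Lemma cone_gen_interior_shift : exists2 K : R, 0 < K & forall x t,
  K * (`|x| + 1) <= t -> (cone_gen gens)° (t *: gsum + x).
Proof.
have [K K0 HK] := cone_gen_shift; exists K => // x t Kt.
apply/nbhs_normP; exists 1 => // y xy.
rewrite -[y](addrNK (t *: gsum)) addrC; apply: HK; apply: lt_le_trans Kt.
rewrite ltr_pM2l // -[y - _](subrK x) addrC; apply: le_lt_trans (ler_normD _ _) _.
by rewrite ltrD2l -addrA -opprD distrC.
Qed.

Lemma cone_gen_sub_closure_interior : cone_gen gens `<=` closure (cone_gen gens)°.
Proof.
move=> x xC B /nbhs_normP[r r0 rB].
have [K K0 HK] := cone_gen_shift.
pose e := r / (`|gsum| + 1).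
have e0 : 0 < e by rewrite divr_gt0 // ltr_pwDr.
exists (x + e *: gsum); split; last first.
  apply: rB; rewrite opprD addrA subrr sub0r normrN normrZ gtr0_norm //.
  by rewrite /e mulrAC ltr_pdivrMr ?ltr_pwDr // ltr_pM2l // ltrDl.
apply/nbhs_normP; exists (e / K); first by rewrite divr_gt0.
move=> y xy; rewrite -[y](subrK (x + e *: gsum)) addrC -addrA.
apply: cone_gen_add => //; apply: HK.
by rewrite distrC mulrC -ltr_pdivlMr.
Qed.

End Generators.

Local Notation rows X := [seq row i X | i <- enum 'I_d].

Lemma size_rows (X : 'M[int]_d) : size (rows X) = d.
Proof. by rewrite size_map size_enum_ord. Qed.

Lemma sum_rows_mulmx (X : 'M[int]_d) (c : 'I_(size (rows X)) -> R) :
  \sum_(i < size (rows X)) c i *: vR (rows X)`_i =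
  (\row_j c (cast_ord (esym (size_rows X)) j)) *m Xr X.
Proof.
rewrite (sum_cast (size_rows X)) mulmx_sum_row; apply: eq_bigr => j _.
rewrite (nth_map j) ?size_enum_ord //= nth_ord_enum mxE.
by rewrite /Defs.vR map_row.
Qed.

Lemma mulmx_sum_rows (X : 'M[int]_d) (a : 'rV[R]_d) :
  a *m Xr X = \sum_(i < size (rows X)) a 0 (cast_ord (size_rows X) i) *: vR (rows X)`_i.
Proof.
rewrite sum_rows_mulmx; congr (_ *m _); apply/matrixP => i j; rewrite !mxE.
by rewrite [i]ord1; congr (a 0 _); apply: val_inj.
Qed.

Lemma fconeP (X : 'M[int]_d) x :
  fcone X x <-> exists2 a : 'rV[R]_d, (forall j, 0 <= a 0 j) & x = a *m Xr X.
Proof.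
split; first by move=> [c [c0 ->]]; rewrite sum_rows_mulmx; eexists => // j; rewrite mxE.
move=> [a a0 ->]; rewrite mulmx_sum_rows; eexists; split; last by [].
by move=> i; apply: a0.
Qed.

Lemma fcone_spanning (X : 'M[int]_d) : Xr X \in unitmx -> spanning (rows X).
Proof. by move=> U x; rewrite -(mulmxKV U x) mulmx_sum_rows; eexists. Qed.

Lemma Sigma_fcone (X : 'M[int]_d) y : Sigma X y -> fcone X (vR y).
Proof.
move=> [a [a0 ->]]; apply/fconeP; exists (vR a); last exact: vR_mulmx.
by move=> j; rewrite mxE ler0z.
Qed.

Lemma Gamma_fcone_Sigma (X : 'M[int]_d) y :
  Xr X \in unitmx -> Gamma X y -> fcone X (vR y) -> Sigma X y.
Proof.
move=> U [a ->] /fconeP[r r0]; rewrite vR_mulmx => /(congr1 (mulmx^~ (invmx (Xr X)))).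
rewrite !mulmxK // => ar; exists a; split => // j.
by rewrite -(ler0z R); have := r0 j; rewrite -ar mxE.
Qed.

Lemma fgens_unitmx (C : set 'rV[R]_d) (X : 'M[int]_d) : fgens C X -> Xr X \in unitmx.
Proof. by move=> [_]; rewrite row_free_unit. Qed.

Lemma fcone_sub_closure_interior (X : 'M[int]_d) :
  Xr X \in unitmx -> fcone X `<=` closure (fcone X)°.
Proof. by move=> U; apply: cone_gen_sub_closure_interior; apply: fcone_spanning. Qed.

Lemma Hilb_cone_gen_eq gens z (c : 'I_(size gens) -> R) i :
  Hilb (cone_gen gens) z -> (forall k, 0 <= c k) ->
  vR z = \sum_k c k *: vR gens`_k -> 1 <= c i -> gens`_i != 0 -> z = gens`_i.
Proof.
move=> [_ [_ irr]] c0 zE ci1 gi0; apply: contrapT => zgi; apply: irr.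
exists gens`_i, (z - gens`_i); split; first exact: latC_gen.
split.
  exists (fun k => c k - (k == i)%:R); split.
    by move=> k; case: eqP => [->|_]; rewrite ?subr_ge0 ?subr0.
  under eq_bigr => k _ do rewrite scalerBl.
  by rewrite sumrB -zE sum_indicator_scale raddfB.
split; first exact/eqP.
by split; [move/subr0_eq | rewrite addrC subrK].
Qed.

Lemma Hilb_norm_bound (C : set 'rV[R]_d) : is_cone C ->
  exists B : R, forall z, Hilb C z -> `|vR z| <= B.
Proof.
move=> [[gens [-> _]] _]; exists (\sum_(k < size gens) `|vR gens`_k|) => z Hz.
have [[c [c0 zE]] _] := Hz.
have [[i [ci1 gi0]] | small] := pselect (exists i, 1 <= c i /\ gens`_i != 0).
  rewrite (Hilb_cone_gen_eq Hz c0 zE ci1 gi0) (bigD1 i) //= lerDl.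
  exact: sumr_ge0.
rewrite zE; apply: le_trans (ler_norm_sum _ _ _) _; apply: ler_sum => i _.
have [->|gi0] := eqVneq gens`_i 0; first by rewrite raddf0 scaler0.
rewrite normrZ ger0_norm // ler_piMl // leNgt; apply/negP => ci1.
by apply: small; exists i; split => //; exact: ltW.
Qed.

Lemma Gamma_det_dvd (X : 'M[int]_d) (m : int) w : (\det X %| m)%Z -> Gamma X (m *: w).
Proof.
move=> /dvdzP[q ->]; exists (q *: (w *m \adj X)).
by rewrite -scalemxAl -mulmxA mul_adj_mx mul_mx_scalar scalerA.
Qed.

Lemma fgens_det_bound (C : set 'rV[R]_d) : is_cone C ->
  exists M : nat, forall X, fgens C X -> (0 < `|\det X| <= M)%N.
Proof.
move=> Cc; have [B HB] := Hilb_norm_bound Cc.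
pose b : int := (Num.truncn B).+1.
have entry_le X : fgens C X -> forall i j, `|X i j| <= b.
  move=> [Xrows _] i j; rewrite -(ler_int R) intr_norm.
  have := norm_entry_le (vR (row i X)) j; rewrite !mxE => /le_trans/(_ (HB _ (Xrows i))).
  by move/le_trans; apply; rewrite ltW // truncnS_gt.
exists (absz (d`!%:R * b ^+ d)) => X fX; apply/andP; split.
  rewrite absz_gt0; apply: contraTneq (fgens_unitmx fX) => det0.
  by rewrite unitmxE det_map_mx det0 rmorph0 unitr0.
rewrite -lez_nat !abszE.
by apply: le_trans (det_norm_le (_ : 0 <= b) (entry_le X fX)) (ler_norm _).
Qed.

Lemma Gamma_common_multiple (C : set 'rV[R]_d) : is_cone C ->
  exists2 N : nat, (0 < N)%N & forall X w, fgens C X -> Gamma X (w *+ N).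
Proof.
move=> Cc; have [M HM] := fgens_det_bound Cc.
exists M`!; first exact: fact_gt0.
move=> X w fX; rewrite -scaler_nat natz; apply: Gamma_det_dvd.
by rewrite dvdzE /= dvdn_fact // HM.
Qed.

Lemma residues_f_covered (C D : set 'rV[R]_d) : D `<=` C ->
  (forall z, exists h, H_D C D h /\ G_D C D (z - h)) -> f_covered_set C D.
Proof.
move=> DC res z Dz; have [h [[X [fX [DX Gh]]] Gzh]] := res z.
split; first exact: DC.
exists X; split => //; apply: Gamma_fcone_Sigma (fgens_unitmx fX) _ (DX _ Dz).
have [[a zhE] [b hE]] := (Gzh X fX DX, Gh).
by exists (a + b); rewrite mulmxDl -zhE -hE subrK.
Qed.

Lemma f_covered_residues (C D : set 'rV[R]_d) : is_cone C -> is_cone D ->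
  (forall X, fgens C X -> D `<=` fcone X \/ D° `&` (fcone X)° = set0) ->
  f_covered_set C D -> forall z, exists h, H_D C D h /\ G_D C D (z - h).
Proof.
move=> Cc [[gD [DE spD]] _] dich cov z.
have [N N0 HN] := Gamma_common_multiple Cc.
have [K K0 HK] := cone_gen_interior_shift spD.
pose k := (Num.truncn (K * (`|vR z| + 1))).+1.
pose y := z + (\sum_(i < size gD) gD`_i) *+ (N * k).
have Dy : D° (vR y).
  rewrite DE /y raddfD raddfMn raddf_sum -scaler_nat addrC; apply: HK.
  apply: le_trans (ltW (truncnS_gt _)) _.
  by rewrite ler_nat leq_pmull.
have [_ [X [fX Sy]]] := cov y (interior_subset Dy).
have DX : D `<=` fcone X.
  case: (dich X fX) => // DX0.
  have := fcone_sub_closure_interior (fgens_unitmx fX) (Sigma_fcone Sy).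
  by move=> /(_ _ (nbhs_interior Dy)); rewrite setIC DX0 => -[].
exists y; split.
  by exists X; do 2!split => //; have [a [_ ->]] := Sy; exists a.
move=> X' fX' _; rewrite opprD addrA subrr sub0r -mulNrn mulnC mulrnA.
exact: HN.
Qed.

End Cones.

Theorem lemma3p1 (R : realType) (d : nat) (C D : set 'rV[R]_d) :
  is_cone C -> is_cone D -> D `<=` C ->
  (forall X : 'M[int]_d, fgens C X ->
     D `<=` fcone X \/ interior D `&` interior (fcone X) = set0) ->
  f_covered_set C D <->
  (forall z : 'rV[int]_d, exists h : 'rV[int]_d, H_D C D h /\ G_D C D (z - h)).
Proof.
move=> Cc Dc DC dich; split; first exact: f_covered_residues.
exact: residues_f_covered.
Qed.
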